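(* Let $G$ be the subgroup of $\mathrm{PSL}_2(\mathbb{Z})$ freely generated by $S_0$, $S_1$ (of order $2$) and $R_2$ (of order $3$) as in the context, with characters $\alpha_0$, $\chi$. Up to isomorphism of representations, the nonsplit indecomposable rank $2$ representations $\rho$ of $G$ containing a copy of the trivial representation (i.e. nonsplit extensions $0\to1\to\rho\to\phi\to0$ of a character $\phi$ by the trivial character) are exactly the following: (1) a single extension $0\to1\to\rho\to\chi^3\to0$, given by $\rho(S_0)=\begin{pmatrix}1&1\\0&-1\end{pmatrix}$, $\rho(S_1)=\begin{pmatrix}1&0\\0&-1\end{pmatrix}$, $\rho(R_2)=\begin{pmatrix}1&0\\0&1\end{pmatrix}$; (2) for each $a\in\{1,5\}$, an infinite family of pairwise nonisomorphic representations parameterized by $\mathbb{P}^1$, arising from extensions $0\to1\to\rho\to\chi^{-a}\to0$, given for $z\in\mathbb{C}$ by $\rho(S_0)=\begin{pmatrix}1&1\\0&-1\end{pmatrix}$, $\rho(S_1)=\begin{pmatrix}1&z\\0&-1\end{pmatrix}$, $\rho(R_2)=\begin{pmatrix}1&0\\0&\zeta^a\end{pmatrix}$, and for $z=\infty$ by $\rho(S_0)=\begin{pmatrix}1&0\\0&-1\end{pmatrix}$, $\rho(S_1)=\begin{pmatrix}1&1\\0&-1\end{pmatrix}$, $\rho(R_2)=\begin{pmatrix}1&0\\0&\zeta^a\end{pmatrix}$; (3) for each $a\in\{2,4\}$, one extension $0\to1\to\rho\to\alpha_0\chi^{-a}\to0$, given by $\rho(S_0)=\begin{pmatrix}1&1\\0&-1\end{pmatrix}$,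 $\rho(S_1)=\begin{pmatrix}1&0\\0&1\end{pmatrix}$, $\rho(R_2)=\begin{pmatrix}1&0\\0&\zeta^a\end{pmatrix}$; (4) for each $a\in\{1,5\}$, one extension $0\to1\to\rho\to\alpha_0\chi^{-a}\to0$, given by $\rho(S_0)=\begin{pmatrix}1&0\\0&1\end{pmatrix}$, $\rho(S_1)=\begin{pmatrix}1&1\\0&-1\end{pmatrix}$, $\rho(R_2)=\begin{pmatrix}1&0\\0&\zeta^a\end{pmatrix}$.
   Context: Let $T=\begin{pmatrix}1&1\\0&1\end{pmatrix}$, $S=\begin{pmatrix}0&-1\\1&0\end{pmatrix}$, $R=ST$ in $\mathrm{PSL}_2(\mathbb{Z})$, and $\zeta=e^{2\pi i/3}$. $G$ is the index-$4$ subgroup of $\mathrm{PSL}_2(\mathbb{Z})$ generated by the principal congruence subgroup $\Gamma(4)$ together with $S$ and $\begin{pmatrix}1&1\\1&2\end{pmatrix}$; it is freely generated by $S_0=S$, $S_1=T^3ST^{-3}$ and $R_2=T^2RT^{-2}=T^2ST^{-1}$, with $S_0^2=S_1^2=R_2^3=1$. Characters of $G$: $\alpha_0(S_0)=-1$, $\alpha_0(S_1)=\alpha_0(R_2)=1$; $\alpha_1(S_1)=-1$, $\alpha_1(S_0)=\alpha_1(R_2)=1$; $\alpha_2(R_2)=\zeta$, $\alpha_2(S_0)=\alpha_2(S_1)=1$. $\chi$ is the restriction to $G$ of the character of $\mathrm{PSL}_2(\mathbb{Z})$ with $\chi(T)=e^{2\pi i/6}$ (so $\chi(S)=-1$, $\chi(R)=\zeta^2$);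 on $G$, $\chi=\alpha_0\alpha_1\alpha_2^2$. $1$ denotes the trivial character. Matrices are written in a basis whose first vector spans the trivial subrepresentation. *)

From HB Require Import structures.
From mathcomp Require Import all_boot all_order all_algebra.
From mathcomp Require Import reals.
From mathcomp Require Import complex.
Set Implicit Arguments. Unset Strict Implicit. Unset Printing Implicit Defensive.
Import Order.TTheory GRing.Theory Num.Theory.
Local Open Scope ring_scope.
Local Open Scope complex_scope.

Inductive gen := S0 | S1 | R2.

Section Defs.
Variable R : realType.
Local Notation C := R[i].

(* zeta = e^{2 pi i / 3} = -1/2 + i sqrt(3)/2 *)
Definition zeta : C := Complex (- (1 / 2)) (Num.sqrt 3 / 2).

(* A rank-2 complex representation of G is determined by the images of the
   free generators, subject exactly to S_0^2 = S_1^2 = R_2^3 = 1. Matrices act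
   on column vectors. *)
Definition is_rep2 (rho : gen -> 'M[C]_2) : Prop :=
  rho S0 ^+ 2 = 1 /\ rho S1 ^+ 2 = 1 /\ rho R2 ^+ 3 = 1.

Definition rep_iso (rho rho' : gen -> 'M[C]_2) : Prop :=
  exists P : 'M[C]_2, P \in unitmx /\ forall g, P *m rho g = rho' g *m P.

Definition has_trivial (rho : gen -> 'M[C]_2) : Prop :=
  exists v : 'cV[C]_2, v != 0 /\ forall g, rho g *m v = v.

(* rank 2: decomposable = isomorphic to a direct sum of two 1-dim reps *)
Definition decomposable (rho : gen -> 'M[C]_2) : Prop :=
  exists P : 'M[C]_2, P \in unitmx /\
    forall g, is_diag_mx (invmx P *m rho g *m P).

Definition indecomposable rho := ~ decomposable rho.

Definition alpha0 (g : gen) : C := match g with S0 => -1 | S1 => 1 | R2 => 1 end.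
Definition alpha1 (g : gen) : C := match g with S0 => 1 | S1 => -1 | R2 => 1 end.
Definition alpha2 (g : gen) : C := match g with S0 => 1 | S1 => 1 | R2 => zeta end.
Definition chi (g : gen) : C := alpha0 g * alpha1 g * alpha2 g ^+ 2.

Definition mx2 (a b c d : C) : 'M[C]_2 :=
  \matrix_(i, j) if i == ord0 then (if j == ord0 then a else b)
                 else (if j == ord0 then c else d).

Definition rep_of (A B D : 'M[C]_2) : gen -> 'M[C]_2 :=
  fun g => match g with S0 => A | S1 => B | R2 => D end.

(* Index of the list: Ext2 a (Some z) is z in C, Ext2 a None is z = infinity *)
Inductive ext_idx :=
  | Ext1
  | Ext2 of nat & option C
  | Ext3 of nat
  | Ext4 of nat.

Definition valid_idx (i : ext_idx) : Prop :=
  match i with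
  | Ext1 => True
  | Ext2 a _ => a = 1%N \/ a = 5%N
  | Ext3 a => a = 2%N \/ a = 4%N
  | Ext4 a => a = 1%N \/ a = 5%N
  end.

Definition listed (i : ext_idx) : gen -> 'M[C]_2 :=
  match i with
  | Ext1 => rep_of (mx2 1 1 0 (-1)) (mx2 1 0 0 (-1)) (mx2 1 0 0 1)
  | Ext2 a (Some z) =>
      rep_of (mx2 1 1 0 (-1)) (mx2 1 z 0 (-1)) (mx2 1 0 0 (zeta ^+ a))
  | Ext2 a None =>
      rep_of (mx2 1 0 0 (-1)) (mx2 1 1 0 (-1)) (mx2 1 0 0 (zeta ^+ a))
  | Ext3 a => rep_of (mx2 1 1 0 (-1)) (mx2 1 0 0 1) (mx2 1 0 0 (zeta ^+ a))
  | Ext4 a => rep_of (mx2 1 0 0 1) (mx2 1 1 0 (-1)) (mx2 1 0 0 (zeta ^+ a))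
  end.

Definition quot_char (i : ext_idx) (g : gen) : C :=
  match i with
  | Ext1 => chi g ^+ 3
  | Ext2 a _ => (chi g)^-1 ^+ a
  | Ext3 a => alpha0 g * (chi g)^-1 ^+ a
  | Ext4 a => alpha0 g * (chi g)^-1 ^+ a
  end.

End Defs.

From HB Require Import structures.
From mathcomp Require Import all_boot all_order all_algebra.
From mathcomp Require Import reals complex ring.
Import Order.TTheory GRing.Theory Num.Theory.
Local Open Scope ring_scope.
Set Implicit Arguments.
Unset Strict Implicit.

(* A representation with a fixed vector is, in a basis starting with that
   vector, of the form g |-> [[1, b g], [0, e g]] with e a character of G and
   b a cocycle for e; the relations S0^2 = S1^2 = R2^3 = 1 say that e S0 and
   e S1 are signs, e R2 is a cube root of unity, and b vanishes wherever e is
   trivial.  Such a representation is decomposable iff its image is abelian,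
   iff b is a coboundary c (e - 1); and two of them with e nontrivial are
   isomorphic iff they have the same e and cocycles that are proportional
   modulo coboundaries.  A nonsplit extension therefore needs two generators
   acting nontrivially.  With exactly two, the cocycles modulo coboundaries
   form a line and there is a single class; when all three act nontrivially,
   e = (-1, -1, zeta^a), they form a plane and the classes a projective line. *)

Section ConjugateMatrices.
Variables (F : comUnitRingType) (n : nat) (P : 'M[F]_n).
Hypothesis P_unit : P \in unitmx.

Lemma mulmx_conj (A B : 'M[F]_n) :
  P *m A *m invmx P *m (P *m B *m invmx P) = P *m (A *m B) *m invmx P.
Proof. by rewrite -!mulmxA (mulmxA (invmx P)) mulVmx // mul1mx. Qed.

Lemma exprmx_conj (A : 'M[F]_n) k :
  (P *m A *m invmx P) ^+ k = P *m A ^+ k *m invmx P.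
Proof.
elim: k => [|k IH]; first by rewrite !expr0 mulmx1 mulmxV.
by rewrite !exprS -!mulmxE IH mulmx_conj.
Qed.

Lemma comm_mx_conj (A B : 'M[F]_n) :
  comm_mx A B -> comm_mx (P *m A *m invmx P) (P *m B *m invmx P).
Proof. by rewrite /comm_mx !mulmx_conj => ->. Qed.

End ConjugateMatrices.

Section RankTwoExtensions.
Variable R : realType.
Local Notation C := R[i].
Local Notation zeta := (zeta R).

Lemma mx2_00 (a b c d : C) : mx2 a b c d 0 0 = a. Proof. by rewrite mxE. Qed.
Lemma mx2_01 (a b c d : C) : mx2 a b c d 0 1 = b. Proof. by rewrite mxE. Qed.
Lemma mx2_10 (a b c d : C) : mx2 a b c d 1 0 = c. Proof. by rewrite mxE. Qed.
Lemma mx2_11 (a b c d : C) : mx2 a b c d 1 1 = d. Proof. by rewrite mxE. Qed.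
Definition mx2E := (mx2_00, mx2_01, mx2_10, mx2_11).

Lemma mx2_eta (M : 'M[C]_2) : M = mx2 (M 0 0) (M 0 1) (M 1 0) (M 1 1).
Proof.
apply/matrixP => i j; rewrite !mxE.
by case: i => [[|[|i]] ?]; case: j => [[|[|j]] ?] //=; congr (M _ _); apply/val_inj.
Qed.

Lemma cV2P (u w : 'cV[C]_2) : u 0 0 = w 0 0 -> u 1 0 = w 1 0 -> u = w.
Proof.
move=> h0 h1; apply/matrixP => -[[|[|i]] ?] j; rewrite ord1 //.
  by rewrite (_ : Ordinal _ = 0) //; exact/val_inj.
by rewrite (_ : Ordinal _ = 1) //; exact/val_inj.
Qed.

Lemma mx2_inj (a b c d a' b' c' d' : C) :
  mx2 a b c d = mx2 a' b' c' d' -> [/\ a = a', b = b', c = c' & d = d'].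
Proof.
move=> E; have entry i j : mx2 a b c d i j = mx2 a' b' c' d' i j by rewrite E.
by move: (entry 0 0) (entry 0 1) (entry 1 0) (entry 1 1); rewrite !mx2E.
Qed.

Lemma mx2_1 : 1 = mx2 1 0 0 1 :> 'M[C]_2.
Proof. by rewrite [LHS]mx2_eta !mxE. Qed.

Lemma mul_mx2 (a b c d a' b' c' d' : C) :
  mx2 a b c d *m mx2 a' b' c' d' =
  mx2 (a * a' + b * c') (a * b' + b * d') (c * a' + d * c') (c * b' + d * d').
Proof.
rewrite [LHS]mx2_eta; congr mx2; by rewrite !mxE !big_ord_recr big_ord0 /= !mxE /= add0r.
Qed.

Lemma unitmx2 (a b c d : C) : (mx2 a b c d \in unitmx) = (a * d - b * c != 0).
Proof.
rewrite unitmxE unitfE (expand_det_row _ 0) !big_ord_recr big_ord0 /= add0r.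
by rewrite /cofactor !det_mx11 !mxE /= expr0 expr1 !mul1r mulN1r mulrN.
Qed.

Lemma rep_isoE (rho sigma : gen -> 'M[C]_2) : rep_iso rho sigma <->
  exists2 P, P \in unitmx & forall g, sigma g = P *m rho g *m invmx P.
Proof.
split=> [[P [uP hP]] | [P uP hP]]; first by exists P => // g; rewrite hP mulmxK.
by exists P; split=> // g; rewrite hP mulmxKV.
Qed.

Lemma eqfun_rep_iso (rho sigma : gen -> 'M[C]_2) : rho =1 sigma -> rep_iso rho sigma.
Proof. by move=> E; exists 1%:M; split=> [|g]; rewrite ?unitmx1 // mul1mx mulmx1 E. Qed.

Lemma rep_iso_sym (rho sigma : gen -> 'M[C]_2) : rep_iso rho sigma -> rep_iso sigma rho.
Proof.
move=> /rep_isoE[P uP hP]; exists (invmx P); split; first by rewrite unitmx_inv.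
by move=> g; rewrite hP !mulmxA mulVmx // mul1mx.
Qed.

Lemma rep_iso_trans (rho sigma tau : gen -> 'M[C]_2) :
  rep_iso rho sigma -> rep_iso sigma tau -> rep_iso rho tau.
Proof.
move=> [P [uP hP]] [Q [uQ hQ]].
exists (Q *m P); split; first by rewrite unitmx_mul uP uQ.
by move=> g; rewrite -mulmxA hP !mulmxA hQ.
Qed.

Lemma is_rep2_iso (rho sigma : gen -> 'M[C]_2) :
  rep_iso rho sigma -> is_rep2 rho -> is_rep2 sigma.
Proof.
move=> /rep_isoE[P uP hP] [h0 [h1 h2]].
have sigmaX g k : sigma g ^+ k = P *m rho g ^+ k *m invmx P.
  by rewrite hP exprmx_conj.
by rewrite /is_rep2 !sigmaX h0 h1 h2 mulmx1 mulmxV.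
Qed.

Lemma has_trivial_iso (rho sigma : gen -> 'M[C]_2) :
  rep_iso rho sigma -> has_trivial rho -> has_trivial sigma.
Proof.
move=> [P [uP hP]] [v [nv hv]]; exists (P *m v); split=> [|g].
  by apply: contra nv => /eqP Pv0; rewrite -(mulKmx uP v) Pv0 mulmx0.
by rewrite mulmxA -hP -mulmxA hv.
Qed.

Lemma decomposable_iso (rho sigma : gen -> 'M[C]_2) :
  rep_iso rho sigma -> decomposable rho -> decomposable sigma.
Proof.
move=> /rep_isoE[P uP hP] [Q [uQ hQ]].
exists (P *m Q); split; first by rewrite unitmx_mul uP uQ.
have inv_PQ : invmx (P *m Q) = invmx Q *m invmx P by exact: (@invrM _ P Q).
by move=> g; rewrite hP inv_PQ -!mulmxA !(mulKmx uP) !mulmxA.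
Qed.

Lemma decomposable_comm (rho : gen -> 'M[C]_2) :
  decomposable rho -> forall g h, rho g *m rho h = rho h *m rho g.
Proof.
move=> [P [uP hP]] g h.
have rhoE k d :
    invmx P *m rho k *m P = diag_mx d -> rho k = P *m diag_mx d *m invmx P.
  by move=> <-; rewrite !mulmxA mulmxV // mul1mx mulmxK.
have [[d /rhoE ->] [d' /rhoE ->]] := (diag_mxP _ (hP g), diag_mxP _ (hP h)).
exact/comm_mx_conj/diag_mx_comm.
Qed.

Lemma zeta_cubic : zeta ^+ 2 + zeta + 1 = 0.
Proof.
have s3 : Num.sqrt (3 : R) * Num.sqrt 3 = 3 by rewrite -expr2 sqr_sqrtr // ler0n.
apply/eqP; rewrite /zeta expr2 eq_complex /=; apply/andP; split; apply/eqP; last by field.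
transitivity ((3 - Num.sqrt 3 * Num.sqrt 3) / 4 : R); first by field.
by rewrite s3 subrr mul0r.
Qed.

Lemma zeta_prim : 3.-primitive_root zeta.
Proof.
have zeta3 : zeta ^+ 3 = 1.
  apply/eqP; rewrite -subr_eq0.
  have -> : zeta ^+ 3 - 1 = (zeta - 1) * (zeta ^+ 2 + zeta + 1) by ring.
  by rewrite zeta_cubic mulr0.
have [m prim_m m_dvd3] := prim_order_exists (isT : (0 < 3)%N) zeta3.
have := prim_order_gt0 prim_m; have := dvdn_leq (isT : (0 < 3)%N) m_dvd3.
case: m prim_m m_dvd3 => [|[|[|[|m]]]] // prim_m _ _ _.
have := prim_expr_order prim_m; rewrite expr1 => zeta1.
move: zeta_cubic; rewrite zeta1 expr1n => /eqP.
by rewrite (_ : 1 + 1 + 1 = 3%:R) ?pnatr_eq0 //; ring.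
Qed.

Lemma zeta_expr_eq1 k : (zeta ^+ k == 1) = (3 %| k)%N.
Proof. by rewrite (prim_order_dvd zeta_prim). Qed.

Lemma zeta_expr_eq k l : (zeta ^+ k == zeta ^+ l) = (k == l %[mod 3])%N.
Proof. exact: eq_prim_root_expr zeta_prim k l. Qed.

Lemma zeta_expr_cube k : (zeta ^+ k) ^+ 3 = 1.
Proof. by rewrite -exprM mulnC exprM (prim_expr_order zeta_prim) expr1n. Qed.

Lemma zeta2V : (zeta ^+ 2)^-1 = zeta.
Proof.
have z0 : zeta ^+ 2 != 0.
  apply/eqP => z0; move: (zeta_expr_cube 2); rewrite z0 expr0n /= => /eqP.
  by rewrite eq_sym oner_eq0.
by apply: (mulfI z0); rewrite mulfV // -exprSr (prim_expr_order zeta_prim).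
Qed.

Lemma oppr1_neq1 : (-1 : C) != 1.
Proof. by rewrite lt_eqF // (lt_trans (ltrN10 C) (@ltr01 C)). Qed.

Lemma gen_eq_dec (g h : gen) : {g = h} + {g <> h}.
Proof. decide equality. Qed.

Lemma eqfun_or_neq (f : gen -> C) x : (forall g, f g = x) \/ exists g, f g != x.
Proof.
have [f0|] := eqVneq (f S0) x; last by right; exists S0.
have [f1|] := eqVneq (f S1) x; last by right; exists S1.
have [f2|] := eqVneq (f R2) x; last by right; exists R2.
by left; case.
Qed.

Definition ext_rep (b e : gen -> C) : gen -> 'M[C]_2 := fun g => mx2 1 (b g) 0 (e g).

Definition coboundary (b e : gen -> C) := exists c, forall g, b g = c * (e g - 1).

Lemma expr_mx2_unitri (x y : C) n :
  mx2 1 x 0 y ^+ n = mx2 1 (x * \sum_(k < n) y ^+ k) 0 (y ^+ n).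
Proof.
elim: n => [|n IH]; first by rewrite expr0 big_ord0 mulr0 mx2_1.
by rewrite exprS -mulmxE IH mul_mx2 big_ord_recr /= exprS; congr mx2; ring.
Qed.

Lemma is_rep2_ext_repP (b e : gen -> C) : is_rep2 (ext_rep b e) <->
  [/\ e S0 ^+ 2 = 1, e S1 ^+ 2 = 1, e R2 ^+ 3 = 1 &
      [/\ b S0 * (1 + e S0) = 0, b S1 * (1 + e S1) = 0 &
          b R2 * (1 + e R2 + e R2 ^+ 2) = 0]].
Proof.
have sum2 y : \sum_(k < 2) y ^+ k = 1 + y :> C.
  by rewrite !big_ord_recr big_ord0 /= add0r expr0 expr1.
have sum3 y : \sum_(k < 3) y ^+ k = 1 + y + y ^+ 2 :> C.
  by rewrite big_ord_recr sum2.
rewrite /is_rep2 /ext_rep !expr_mx2_unitri !sum2 sum3 mx2_1.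
by split=> [[/mx2_inj[_ ? _ ?] [/mx2_inj[_ ? _ ?] /mx2_inj[_ ? _ ?]]] |
            [-> -> -> [-> -> ->]]].
Qed.

Lemma ext_rep_cocycle_eq0 (b e : gen -> C) g :
  is_rep2 (ext_rep b e) -> e g = 1 -> b g = 0.
Proof.
move=> /is_rep2_ext_repP[_ _ _ [h0 h1 h2]] e1.
have [n [n_gt0 bn]] : exists n, (0 < n)%N /\ b g * n%:R = 0.
  by case: g e1 => e1; [exists 2%N; rewrite -h0 | exists 2%N; rewrite -h1
    | exists 3%N; rewrite -h2]; split=> //; rewrite e1; ring.
by move/eqP: bn; rewrite mulf_eq0 pnatr_eq0 (gtn_eqF n_gt0) orbF => /eqP.
Qed.

Lemma has_trivial_ext_rep (b e : gen -> C) : has_trivial (ext_rep b e).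
Proof.
exists (delta_mx 0 0); split=> [|g].
  by apply/eqP => /(congr1 (fun v : 'cV[C]_2 => v 0 0)) /eqP; rewrite !mxE oner_eq0.
by rewrite -colE; apply: cV2P; rewrite !mxE.
Qed.

Lemma fix_delta_mx2 (M : 'M[C]_2) :
  M *m delta_mx 0 0 = delta_mx 0 0 :> 'cV[C]_2 -> M = mx2 1 (M 0 1) 0 (M 1 1).
Proof.
rewrite -colE => /(congr1 (fun v : 'cV[C]_2 => (v 0 0, v 1 0))).
by rewrite !mxE /= => -[M00 M10]; rewrite [LHS]mx2_eta M00 M10.
Qed.

Lemma ext_rep_of_has_trivial (rho : gen -> 'M[C]_2) :
  has_trivial rho -> exists b e, rep_iso rho (ext_rep b e).
Proof.
move=> [v [nv hv]].
have [Q uQ Qv] : exists2 Q, Q \in unitmx & Q *m delta_mx 0 0 = v.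
  have [v0|v0] := eqVneq (v 0 0) 0.
    exists (mx2 0 1 (v 1 0) 0); last by rewrite -colE; apply: cV2P; rewrite !mxE.
    rewrite unitmx2 mul0r mul1r sub0r oppr_eq0; apply: contra nv => /eqP v1.
    by apply/eqP/cV2P; rewrite mxE.
  exists (mx2 (v 0 0) 0 (v 1 0) 1); last by rewrite -colE; apply: cV2P; rewrite !mxE.
  by rewrite unitmx2 mulr1 mul0r subr0.
pose M g := invmx Q *m rho g *m Q.
have M_fix g : M g *m delta_mx 0 0 = delta_mx 0 0 :> 'cV[C]_2.
  by rewrite /M -!mulmxA Qv hv -Qv mulKmx.
exists (fun g => M g 0 1), (fun g => M g 1 1).
apply/rep_isoE; exists (invmx Q); rewrite ?unitmx_inv // => g.
by rewrite invmxK -/(M g) {1}(fix_delta_mx2 (M_fix g)).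
Qed.

Lemma rep_iso_ext_rep (b e b' : gen -> C) q r : r != 0 ->
  (forall g, b g + q * (e g - 1) = r * b' g) -> rep_iso (ext_rep b e) (ext_rep b' e).
Proof.
move=> r0 hb; exists (mx2 1 q 0 r); split=> [|g].
  by rewrite unitmx2 mul1r mulr0 subr0.
rewrite !mul_mx2; congr mx2; try ring.
by transitivity (q + (b g + q * (e g - 1))); [ring | rewrite hb; ring].
Qed.

(* A generator with [e' g != 1] forces every intertwiner to be upper triangular. *)
Lemma rep_iso_ext_repP (b e b' e' : gen -> C) : (exists g, e' g != 1) ->
  rep_iso (ext_rep b e) (ext_rep b' e') <->
  (forall g, e g = e' g) /\
  exists q r : C, r != 0 /\ forall g, b g + q * (e g - 1) = r * b' g.
Proof.
move=> [g0 e'g0]; split=> [[P [uP hP]] | [ee' [q [r [r0 hb]]]]]; last first.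
  apply: rep_iso_trans (rep_iso_ext_rep r0 hb) (eqfun_rep_iso _) => g.
  by rewrite /ext_rep ee'.
move: uP hP; rewrite [P]mx2_eta unitmx2.
move: (P 0 0) (P 0 1) (P 1 0) (P 1 1) => p q s r unitP hP.
have rel g : [/\ s = e' g * s, p * b g + q * e g = q + b' g * r
                & s * b g + r * e g = e' g * r].
  move: (hP g); rewrite /ext_rep !mul_mx2 => /mx2_inj[_].
  by rewrite !mulr1 !mulr0 !mul1r !mul0r !addr0 !add0r.
have s0 : s = 0.
  have [h _ _] := rel g0.
  have : s * (e' g0 - 1) = 0 by rewrite mulrBr mulr1 mulrC -h subrr.
  by move/eqP; rewrite mulf_eq0 subr_eq0 (negPf e'g0) orbF => /eqP.
move: unitP; rewrite s0 mulr0 subr0 mulf_eq0 negb_or => /andP[p0 r0].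
split=> [g | ].
  have [_ _ +] := rel g; rewrite s0 mul0r add0r [e' g * r]mulrC.
  exact: mulfI.
exists (q / p), (r / p); split=> [|g]; first by rewrite mulf_neq0 ?invr_eq0.
have [_ h _] := rel g.
transitivity ((p * b g + q * e g - q) / p); first by field.
by rewrite h; field.
Qed.

Lemma decomposable_diag_ext_rep (e : gen -> C) : decomposable (ext_rep (fun=> 0) e).
Proof.
exists 1%:M; split=> [|g]; rewrite ?unitmx1 // invmx1 mul1mx mulmx1.
by apply/is_diag_mxP => -[[|[|i]] ?] [[|[|j]] ?] //= _; rewrite mxE.
Qed.

Lemma decomposable_ext_repP (b e : gen -> C) :
  is_rep2 (ext_rep b e) -> decomposable (ext_rep b e) <-> coboundary b e.
Proof.
move=> rep; split=> [dec | [c hc]]; last first.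
  have iso : rep_iso (ext_rep b e) (ext_rep (fun=> 0) e).
    by apply: (rep_iso_ext_rep (q := - c) (oner_neq0 C)) => g; rewrite hc; ring.
  exact: decomposable_iso (rep_iso_sym iso) (decomposable_diag_ext_rep e).
have comm g h : b g * (e h - 1) = b h * (e g - 1).
  move: (decomposable_comm dec g h); rewrite /ext_rep !mul_mx2 => /mx2_inj[_ gh _ _].
  apply: (addIr (b g + b h)); transitivity (1 * b h + b g * e h); first by ring.
  by rewrite gh; ring.
have [e1 | [h eh]] := eqfun_or_neq e 1.
  by exists 0 => g; rewrite mul0r (ext_rep_cocycle_eq0 rep (e1 g)).
exists (b h / (e h - 1)) => g.
have ne : e h - 1 != 0 by rewrite subr_eq0.
by rewrite mulrAC -comm; field.
Qed.

(* For [e h != 1], the cocycle cohomologous to [b] that vanishes at [h]. *)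
Definition pivot (b e : gen -> C) h g := b g - b h / (e h - 1) * (e g - 1).

Lemma rep_iso_pivot (b e : gen -> C) h r : r != 0 ->
  rep_iso (ext_rep b e) (ext_rep (fun g => pivot b e h g / r) e).
Proof.
move=> r0; apply: (rep_iso_ext_rep (q := - (b h / (e h - 1))) r0) => g.
by rewrite [r * _]mulrC divfK // /pivot; ring.
Qed.

Lemma pivot_self (b e : gen -> C) h : e h != 1 -> pivot b e h h = 0.
Proof. by move=> eh; rewrite /pivot; field; rewrite subr_eq0. Qed.

Lemma pivot_trivial (b e : gen -> C) h g :
  is_rep2 (ext_rep b e) -> e g = 1 -> pivot b e h g = 0.
Proof.
by move=> rep eg; rewrite /pivot eg (ext_rep_cocycle_eq0 rep eg) subrr mulr0 subr0.
Qed.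

Lemma nonsplit_pivot (b e : gen -> C) h :
  ~ coboundary b e -> exists g, pivot b e h g != 0.
Proof.
move=> nonsplit; have [p0|//] := eqfun_or_neq (pivot b e h) 0.
case: nonsplit; exists (b h / (e h - 1)) => g.
by apply/eqP; rewrite -subr_eq0 -/(pivot b e h g) p0.
Qed.

Lemma coboundary_one_nontrivial (b e : gen -> C) h : is_rep2 (ext_rep b e) ->
  (forall g, g <> h -> e g = 1) -> coboundary b e.
Proof.
move=> rep eh; have [eh1|eh1] := eqVneq (e h) 1.
  exists 0 => g; rewrite mul0r; apply: (ext_rep_cocycle_eq0 rep).
  by case: (gen_eq_dec g h) => [->|/eh].
exists (b h / (e h - 1)) => g; case: (gen_eq_dec g h) => [->|/eh eg].
  by field; rewrite subr_eq0.
by rewrite eg subrr mulr0 (ext_rep_cocycle_eq0 rep eg).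
Qed.

Lemma not_coboundary (b e : gen -> C) g h :
  b g = 0 -> e g != 1 -> b h != 0 -> ~ coboundary b e.
Proof.
move=> bg eg bh [c hc]; move: (hc g); rewrite bg => /esym/eqP.
rewrite mulf_eq0 subr_eq0 (negPf eg) orbF => /eqP c0.
by move: bh; rewrite hc c0 mul0r eqxx.
Qed.

Section NonsplitExtensions.
Variables b e : gen -> C.
Hypotheses (rep : is_rep2 (ext_rep b e)) (nonsplit : ~ coboundary b e).

Lemma rep_iso_two_nontrivial (L : gen -> 'M[C]_2) h g0 k :
  (forall x, x = h \/ x = g0 \/ x = k) -> e g0 != 1 -> e k = 1 ->
  L h = mx2 1 1 0 (e h) -> L g0 = mx2 1 0 0 (e g0) -> L k = mx2 1 0 0 (e k) ->
  rep_iso (ext_rep b e) L.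
Proof.
move=> cover eg0 ek Lh Lg0 Lk.
have [x px] := nonsplit_pivot g0 nonsplit.
have ph : pivot b e g0 h != 0.
  case: (cover x) px => [-> // | [->|->]]; first by rewrite pivot_self ?eqxx.
  by rewrite pivot_trivial ?eqxx.
apply: rep_iso_trans (rep_iso_pivot b e g0 ph) (eqfun_rep_iso _) => x'.
case: (cover x') => [->|[->|->]]; rewrite /ext_rep; first by rewrite Lh divff.
  by rewrite Lg0 pivot_self ?mul0r.
by rewrite Lk pivot_trivial ?mul0r.
Qed.

Lemma rep_iso_three_nontrivial a : e S0 = -1 -> e S1 = -1 -> e R2 = zeta ^+ a ->
  zeta ^+ a != 1 -> exists o, rep_iso (ext_rep b e) (listed (Ext2 a o)).
Proof.
move=> e0 e1 e2 za; have eR2 : e R2 != 1 by rewrite e2.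
have [x px] := nonsplit_pivot R2 nonsplit.
have [p0|p0] := eqVneq (pivot b e R2 S0) 0.
  have p1 : pivot b e R2 S1 != 0.
    by case: x px => // px; [rewrite p0 eqxx in px | rewrite pivot_self ?eqxx in px].
  exists None; apply: rep_iso_trans (rep_iso_pivot b e R2 p1) (eqfun_rep_iso _).
  by case; rewrite /ext_rep /= ?p0 ?mul0r ?divff ?pivot_self ?mul0r ?e0 ?e1 ?e2.
exists (Some (pivot b e R2 S1 / pivot b e R2 S0)).
apply: rep_iso_trans (rep_iso_pivot b e R2 p0) (eqfun_rep_iso _).
by case; rewrite /ext_rep /= ?divff ?pivot_self ?mul0r ?e0 ?e1 ?e2.
Qed.

Lemma at_least_two_nontrivial : ~ exists h, forall g, g <> h -> e g = 1.
Proof. by move=> [h eh]; exact/nonsplit/(coboundary_one_nontrivial rep eh). Qed.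

Lemma nonsplit_rep_iso_listed : exists2 i, valid_idx i & rep_iso (ext_rep b e) (listed i).
Proof.
move/is_rep2_ext_repP: (rep) => [e0 e1 e2 _].
have sq1 (x : C) : x ^+ 2 = 1 -> x = 1 \/ x = -1.
  by move/eqP; rewrite sqrf_eq1 => /orP[] /eqP; [left|right].
have z41 : zeta ^+ 4 = zeta ^+ 1 by apply/eqP; rewrite zeta_expr_eq.
have z52 : zeta ^+ 5 = zeta ^+ 2 by apply/eqP; rewrite zeta_expr_eq.
have [[k k3] /= eR2] := prim_rootP zeta_prim e2.
have [s0|s0] := sq1 _ e0; have [s1|s1] := sq1 _ e1;
  case: k k3 eR2 => [|[|[|//]]] _ eR2; rewrite ?expr0 in eR2.
(* When at most one generator acts nontrivially, b is a coboundary. *)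
all: try by case: at_least_two_nontrivial; (exists S0 + exists S1 + exists R2) => -[].
- exists (Ext4 R 1); first by left.
  apply: (rep_iso_two_nontrivial (h := S1) (g0 := R2) (k := S0)) => //=;
    rewrite ?s0 ?s1 ?eR2 ?zeta_expr_eq1 //; by case; auto.
- exists (Ext4 R 5); first by right.
  apply: (rep_iso_two_nontrivial (h := S1) (g0 := R2) (k := S0)) => //=;
    rewrite ?s0 ?s1 ?eR2 ?z52 ?zeta_expr_eq1 //; by case; auto.
- exists (Ext3 R 4); first by right.
  apply: (rep_iso_two_nontrivial (h := S0) (g0 := R2) (k := S1)) => //=;
    rewrite ?s0 ?s1 ?eR2 ?z41 ?zeta_expr_eq1 //; by case; auto.
- exists (Ext3 R 2); first by left.
  apply: (rep_iso_two_nontrivial (h := S0) (g0 := R2) (k := S1)) => //=;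
    rewrite ?s0 ?s1 ?eR2 ?zeta_expr_eq1 //; by case; auto.
- exists (Ext1 R) => //.
  apply: (rep_iso_two_nontrivial (h := S0) (g0 := S1) (k := R2)) => //=;
    rewrite ?s0 ?s1 ?eR2 ?oppr1_neq1 //; by case; auto.
- have [|o iso] := rep_iso_three_nontrivial s0 s1 eR2; first by rewrite zeta_expr_eq1.
  by exists (Ext2 1 o); first by left.
- have [|o iso] := rep_iso_three_nontrivial (a := 5) s0 s1 (etrans eR2 (esym z52)).
    by rewrite zeta_expr_eq1.
  by exists (Ext2 5 o); first by right.
Qed.

End NonsplitExtensions.

Lemma listed_unitriangular (i : ext_idx R) g :
  listed i g 0 0 = 1 /\ listed i g 1 0 = 0.
Proof. by case: i => [|a [z|]|a|a]; case: g; rewrite /= !mx2E. Qed.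

Lemma listed_iso_ext_rep (i : ext_idx R) :
  rep_iso (listed i) (ext_rep (fun g => listed i g 0 1) (fun g => listed i g 1 1)).
Proof.
apply: eqfun_rep_iso => g; have [l00 l10] := listed_unitriangular i g.
by rewrite [LHS]mx2_eta l00 l10.
Qed.

Lemma listed_is_rep2 (i : ext_idx R) : is_rep2 (listed i).
Proof.
apply: is_rep2_iso (rep_iso_sym (listed_iso_ext_rep i)) _; apply/is_rep2_ext_repP.
by case: i => [|a [z|]|a|a]; rewrite /= !mx2E ?zeta_expr_cube; split; try split; ring.
Qed.

Lemma listed_quot_char (i : ext_idx R) g :
  valid_idx i -> listed i g 1 1 = quot_char i g.
Proof.
have [c0 c1 c2] : [/\ chi R S0 = -1, chi R S1 = -1 & chi R R2 = zeta ^+ 2].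
  by rewrite /chi /= expr1n !mulr1 !mul1r.
case: i => [|a [z|]|a|a] vi; case: g;
  rewrite /= !mx2E ?c0 ?c1 ?c2 ?invrN1 ?zeta2V ?mul1r ?zeta_expr_cube //;
  by first [ring | case: vi => ->; ring].
Qed.

Lemma listed_has_trivial (i : ext_idx R) : has_trivial (listed i).
Proof.
exact: has_trivial_iso (rep_iso_sym (listed_iso_ext_rep i)) (has_trivial_ext_rep _ _).
Qed.

Lemma listed_indecomposable (i : ext_idx R) : valid_idx i -> indecomposable (listed i).
Proof.
move=> vi /(decomposable_iso (listed_iso_ext_rep i)).
move/(decomposable_ext_repP (is_rep2_iso (listed_iso_ext_rep i) (listed_is_rep2 i))).
case: i vi => [_|a [z|] va|a va|a va].
- by apply: (not_coboundary (g := S1) (h := S0)); rewrite /= !mx2E ?oppr1_neq1 ?oner_neq0.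
all: have za : zeta ^+ a != 1 by case: va => ->; rewrite zeta_expr_eq1.
- by apply: (not_coboundary (g := R2) (h := S0)); rewrite /= !mx2E ?oner_neq0.
- by apply: (not_coboundary (g := R2) (h := S1)); rewrite /= !mx2E ?oner_neq0.
- by apply: (not_coboundary (g := R2) (h := S0)); rewrite /= !mx2E ?oner_neq0.
- by apply: (not_coboundary (g := R2) (h := S1)); rewrite /= !mx2E ?oner_neq0.
Qed.

Lemma listed_char_nontrivial (i : ext_idx R) : exists g, listed i g 1 1 != 1.
Proof.
by case: i => [|a [z|]|a|a]; [exists S0|exists S0|exists S0|exists S0|exists S1];
  rewrite /= mx2E oppr1_neq1.
Qed.

Lemma rep_iso_listed_cocycles (i j : ext_idx R) : rep_iso (listed i) (listed j) ->
  (forall g, listed i g 1 1 = listed j g 1 1) /\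
  exists q r : C, r != 0 /\
    forall g, listed i g 0 1 + q * (listed i g 1 1 - 1) = r * listed j g 0 1.
Proof.
move=> iso; apply/(rep_iso_ext_repP _ _ _ (listed_char_nontrivial j)).
apply: rep_iso_trans (rep_iso_sym (listed_iso_ext_rep i)) _.
exact: rep_iso_trans iso (listed_iso_ext_rep j).
Qed.

Lemma rep_iso_listed_Ext2 a (o o' : option C) : zeta ^+ a != 1 ->
  rep_iso (listed (Ext2 a o)) (listed (Ext2 a o')) -> o = o'.
Proof.
move=> za /rep_iso_listed_cocycles[_ [q [r [r0 rel]]]].
case: o o' rel => [z|] [z'|] rel //;
  have q0 : q = 0 by move: (rel R2); rewrite /= !mx2E mulr0 add0r => /eqP;
    rewrite mulf_eq0 subr_eq0 (negPf za) orbF => /eqP.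
all: move: (rel S0) (rel S1); rewrite q0 /= !mx2E !mul0r !addr0.
- by rewrite mulr1 => <-; rewrite mul1r => ->.
- by rewrite mulr0 => /eqP; rewrite oner_eq0.
- by rewrite mulr1 => r_eq0; rewrite -r_eq0 eqxx in r0.
Qed.

Lemma listed_inj (i j : ext_idx R) : valid_idx i -> valid_idx j ->
  rep_iso (listed i) (listed j) -> i = j.
Proof.
move=> vi vj iso; have [ee _] := rep_iso_listed_cocycles iso.
have eq1_zeta k : (1 == zeta ^+ k) = (3 %| k)%N by rewrite eq_sym zeta_expr_eq1.
have eq1N1 : (1 == -1 :> C) = false by rewrite eq_sym (negPf oppr1_neq1).
case: i vi iso ee => [_|a [z|] [] ->|a [] ->|a [] ->];
  case: j vj => [_|a' [z'|] [] ->|a' [] ->|a' [] ->] iso ee //;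
  move: (ee S0) (ee S1) (ee R2); rewrite /= !mx2E => /eqP e0 /eqP e1 /eqP e2;
  rewrite ?eqxx ?eq1N1 ?(negPf oppr1_neq1) ?zeta_expr_eq1 ?eq1_zeta ?zeta_expr_eq
    in e0 e1 e2 => //.
all: by congr Ext2; apply: rep_iso_listed_Ext2 iso; rewrite zeta_expr_eq1.
Qed.

End RankTwoExtensions.

Unset Implicit Arguments.

Theorem proposition6p3 (R : realType) :
  (* each listed matrix triple is a representation of G which is an extension
     0 -> 1 -> rho -> phi -> 0 (first basis vector trivial) of the stated phi *)
  (forall i : ext_idx R, valid_idx i ->
     is_rep2 (listed i) /\
     forall g, listed i g ord0 ord0 = 1 /\ listed i g 1 0 = 0 /\
               listed i g 1 1 = quot_char i g) /\
  (* classification: indecomposable rank-2 reps containing the trivial rep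
     are, up to isomorphism, exactly the listed ones *)
  (forall rho : gen -> 'M[R[i]]_2, is_rep2 rho ->
     (has_trivial rho /\ indecomposable rho) <->
     exists i : ext_idx R, valid_idx i /\ rep_iso rho (listed i)) /\
  (* the listed representations are pairwise nonisomorphic *)
  (forall i j : ext_idx R, valid_idx i -> valid_idx j ->
     rep_iso (listed i) (listed j) -> i = j).
Proof.
split.
  move=> i vi; split=> [|g]; first exact: listed_is_rep2.
  by have [-> ->] := listed_unitriangular i g; rewrite listed_quot_char.
split=> [rho rep|]; last exact: listed_inj.
split=> [[/ext_rep_of_has_trivial[b [e iso]] indec] | [i [vi iso]]].
  have rep_tri := is_rep2_iso iso rep.
  have nonsplit : ~ coboundary b e.
    by move/(decomposable_ext_repP rep_tri)/(decomposable_iso (rep_iso_sym iso)).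
  have [i vi iso_i] := nonsplit_rep_iso_listed rep_tri nonsplit.
  by exists i; split; last exact: rep_iso_trans iso iso_i.
split; first exact: has_trivial_iso (rep_iso_sym iso) (listed_has_trivial i).
by move/(decomposable_iso iso); exact: listed_indecomposable.
Qed.
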